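(* Let $(X,d)$ be a metric space, let $P\subseteq X$ be a finite set of terminals, and let $P_1,\dots,P_k$ be a partition of $P$ into nonempty sets. Suppose $\mathcal{A}$ is an $\alpha$-factor approximation algorithm for the minimum Steiner tree problem in $(X,d)$ (for every finite $S\subseteq X$ it outputs a Steiner tree for $S$ of length at most $\alpha$ times the minimum length of a Steiner tree for $S$). Consider the following ''simple bottom-up'' algorithm: for each $i=1,\dots,k$ compute $T_i:=\mathcal{A}(P_i)$, choose an arbitrary connection point $q_i\in P_i$, compute $T_{top}:=\mathcal{A}(\{q_1,\dots,q_k\})$, and return $T=(T_{top},T_1,\dots,T_k)$. Then $T$ is a two-level Steiner tree for $P_1,\dots,P_k$ and $$l(T)\le 2\alpha\cdot l(T^{\star}),$$ where $T^{\star}$ is a minimum-length two-level Steiner tree for $P_1,\dots,P_k$.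
   Context: A Steiner tree for a finite set $S\subseteq X$ is a finite tree whose vertex set is a subset of $X$ containing $S$; its length $l(\cdot)$ is the sum of $d(x,y)$ over its edges $\{x,y\}$. A two-level Steiner tree for $P_1,\dots,P_k$ is a tuple $T=(T_{top},T_1,\dots,T_k)$ where each $T_i$ is a Steiner tree for $P_i$ and $T_{top}$ is a Steiner tree such that for every $i$ there is a point $q_i$ that is a vertex of both $T_{top}$ and $T_i$ (so $T_{top}$ is a Steiner tree for $\{q_1,\dots,q_k\}$ and $T_i$ a Steiner tree for $P_i\cup\{q_i\}$). Its length is $l(T)=l(T_{top})+\sum_{i=1}^k l(T_i)$. *)

From HB Require Import structures.
From mathcomp Require Import all_boot all_order all_algebra.
From mathcomp Require Import finmap.
Set Implicit Arguments. Unset Strict Implicit. Unset Printing Implicit Defensive.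
Import Order.TTheory GRing.Theory Num.Theory.
Local Open Scope fset_scope.
Local Open Scope ring_scope.

Definition is_metric (R : realFieldType) (X : Type) (d : X -> X -> R) : Prop :=
  [/\ forall x y, 0 <= d x y,
      forall x y, d x y = 0 <-> x = y,
      forall x y, d x y = d y x &
      forall x y z, d x z <= d x y + d y z].

(* A finite graph with vertices in X: a finite vertex set and a list of edges,
   each edge (x,y) standing for the unordered edge {x,y}. *)
Record graph (X : choiceType) := Graph { verts : {fset X}; edges : seq (X * X) }.

Definition adj (X : choiceType) (G : graph X) (x y : X) : bool :=
  ((x, y) \in edges G) || ((y, x) \in edges G).

Definition simple_graph (X : choiceType) (G : graph X) : Prop :=
  [/\ forall e, e \in edges G -> [/\ e.1 \in verts G, e.2 \in verts G & e.1 != e.2]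
    & uniq [seq [fset e.1; e.2] | e <- edges G]].

Definition connected_graph (X : choiceType) (G : graph X) : Prop :=
  forall x y, x \in verts G -> y \in verts G ->
    exists p : seq X, path (adj G) x p /\ last x p = y.

Definition has_cycle (X : choiceType) (G : graph X) : Prop :=
  exists c : seq X, [/\ 3 <= size c, uniq c & cycle (adj G) c]%N.

Definition is_tree (X : choiceType) (G : graph X) : Prop :=
  [/\ verts G != fset0, simple_graph G, connected_graph G & ~ has_cycle G].

Definition steiner_tree (X : choiceType) (G : graph X) (S : {fset X}) : Prop :=
  is_tree G /\ S `<=` verts G.

Definition glength (R : realFieldType) (X : choiceType) (d : X -> X -> R)
  (G : graph X) : R := \sum_(e <- edges G) d e.1 e.2.

Definition two_level (X : choiceType) (k : nat) (P : 'I_k -> {fset X})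
  (Ttop : graph X) (T : 'I_k -> graph X) : Prop :=
  is_tree Ttop /\
  exists q : 'I_k -> X, forall i,
    [/\ q i \in verts Ttop, q i \in verts (T i) & steiner_tree (T i) (P i)].

Definition two_level_length (R : realFieldType) (X : choiceType) (d : X -> X -> R)
  (k : nat) (Ttop : graph X) (T : 'I_k -> graph X) : R :=
  glength d Ttop + \sum_(i < k) glength d (T i).

Definition approx_alg (R : realFieldType) (X : choiceType) (d : X -> X -> R)
  (alpha : R) (A : {fset X} -> graph X) : Prop :=
  forall S : {fset X}, steiner_tree (A S) S /\
    forall T', steiner_tree T' S -> glength d (A S) <= alpha * glength d T'.

(** The union of the top tree and the bottom trees of any two-level Steiner tree
    [T_opt] is a connected graph containing every connection point [q_i], so it
    contains a Steiner tree for [{q_1, ..., q_k}] of length at most [l(T_opt)];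
    hence [l(T_top) <= alpha l(T_opt)].  Each bottom tree of [T_opt] is a Steiner tree
    for its [P_i], so [sum_i l(T_i) <= alpha l(T_opt)] as well, and adding the two
    bounds gives [2 alpha l(T_opt)]. *)

From HB Require Import structures.
From mathcomp Require Import all_boot all_order all_algebra.
From mathcomp Require Import finmap.
From mathcomp Require Import lra.
Set Implicit Arguments. Unset Strict Implicit. Unset Printing Implicit Defensive.
Import Order.TTheory GRing.Theory Num.Theory.
Local Open Scope fset_scope.
Local Open Scope ring_scope.

Section SteinerTrees.

Variable X : choiceType.

Definition edge_rel (E : seq (X * X)) : rel X :=
  fun x y => ((x, y) \in E) || ((y, x) \in E).

Definition edge_closed (E : seq (X * X)) (W : {fset X}) : Prop :=
  forall e, e \in E -> (e.1 \in W) = (e.2 \in W).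

Lemma adjE (G : graph X) : adj G = edge_rel (edges G).
Proof. by []. Qed.

Lemma edge_relC E x y : edge_rel E x y = edge_rel E y x.
Proof. by rewrite /edge_rel orbC. Qed.

Lemma edge_rel_sub E E' : {subset E <= E'} -> subrel (edge_rel E) (edge_rel E').
Proof.
by move=> sEE' x y /orP[/sEE' xy | /sEE' yx]; rewrite /edge_rel ?xy ?yx ?orbT.
Qed.

Lemma edge_closed_path E W x p :
  edge_closed E W -> x \in W -> path (edge_rel E) x p -> last x p \in W.
Proof.
move=> clW; elim: p x => //= y p IH x xW /andP[/orP[xy | yx] py]; apply: IH => //.
  by rewrite -(clW _ xy).
by rewrite (clW _ yx).
Qed.

Lemma is_tree_fset1 (r : X) : is_tree (Graph [fset r] [::]).
Proof.
split => //=; first by apply/fset0Pn; exists r; rewrite inE.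
- by move=> x y; rewrite !inE => /eqP -> /eqP ->; exists [::].
- by case=> -[|x [|y c]] [].
Qed.

Lemma glength_ge0 (R : realFieldType) (d : X -> X -> R) (G : graph X) :
  (forall x y, 0 <= d x y) -> 0 <= glength d G.
Proof. by move=> d_ge0; apply: sumr_ge0 => e _; apply: d_ge0. Qed.

Lemma tree_uniq_edges (G : graph X) : is_tree G -> uniq (edges G).
Proof. by case=> _ [_ /map_uniq]. Qed.

Section AddLeaf.

Variables (W : {fset X}) (E : seq (X * X)) (u v : X) (e : X * X).
Hypotheses (treeWE : is_tree (Graph W E)) (uW : u \in W) (vW : v \notin W).
Hypothesis e_uv : (e == (u, v)) || (e == (v, u)).

Lemma edges_in_verts e' : e' \in E -> e'.1 \in W /\ e'.2 \in W.
Proof. by case: treeWE => _ [/(_ e') simpleE _] _ _ /simpleE[]. Qed.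

Lemma edge_rel_in_verts x y : edge_rel E x y -> x \in W /\ y \in W.
Proof. by case/orP=> /edges_in_verts [] //= yW xW. Qed.

Lemma edge_rel_leaf x y :
  edge_rel (e :: E) x y =
  [|| (x == u) && (y == v), (x == v) && (y == u) | edge_rel E x y].
Proof.
rewrite /edge_rel !in_cons; case/orP: e_uv => /eqP ->; rewrite !xpair_eqE;
by case: (x == u); case: (y == v); case: (x == v); case: (y == u);
   case: ((x, y) \in E); case: ((y, x) \in E).
Qed.

Lemma leaf_neq : u != v.
Proof. by apply: contraNneq vW => <-. Qed.

Lemma leaf_neighbour y : edge_rel (e :: E) v y -> y = u.
Proof.
rewrite edge_rel_leaf eqxx [v == u]eq_sym (negbTE leaf_neq) /=.
by case/orP=> [/eqP // | /edge_rel_in_verts [vW' _]]; move: vW; rewrite vW'.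
Qed.

Lemma edge_rel_sub_leaf : subrel (edge_rel E) (edge_rel (e :: E)).
Proof. by move=> x y exy; rewrite edge_rel_leaf exy !orbT. Qed.

Lemma simple_leaf : simple_graph (Graph (v |` W) (e :: E)).
Proof.
have [_ [simpleE uniqE] _ _] := treeWE.
split=> [e' | ] /=.
  rewrite in_cons => /orP[/eqP -> | /simpleE[e1W e2W ne]]; last first.
    by rewrite !in_fset1U e1W e2W !orbT.
  have uv := leaf_neq.
  by case/orP: e_uv => /eqP -> /=; rewrite !in_fset1U eqxx uW ?orbT // eq_sym.
rewrite uniqE andbT; apply/mapP => -[e' /edges_in_verts [e1W e2W] same].
have : v \in [fset e.1; e.2] by case/orP: e_uv => /eqP ->; rewrite !inE eqxx ?orbT.
by move: vW; rewrite same !inE => + /orP[] /eqP vE; rewrite vE ?e1W ?e2W.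
Qed.

Lemma connected_leaf : connected_graph (Graph (v |` W) (e :: E)).
Proof.
have [_ _ connWE _] := treeWE; rewrite /connected_graph !adjE /= in connWE *.
have uv_adj : edge_rel (e :: E) u v by rewrite edge_rel_leaf !eqxx.
have liftW x y : x \in W -> y \in W ->
    exists p, path (edge_rel (e :: E)) x p /\ last x p = y.
  move=> xW yW; have [p [pp <-]] := connWE x y xW yW.
  by exists p; split=> //; exact: (sub_path edge_rel_sub_leaf pp).
move=> x y; rewrite !in_fset1U => /orP[/eqP -> | xW] /orP[/eqP -> | yW].
- by exists [::].
- have [p [pp <-]] := liftW u y uW yW.
  by exists (u :: p); rewrite /= edge_relC uv_adj.
- have [p [pp pu]] := liftW x u xW uW.
  by exists (rcons p v); rewrite last_rcons rcons_path pp pu uv_adj.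
- exact: liftW.
Qed.

Lemma acyclic_leaf : ~ has_cycle (Graph (v |` W) (e :: E)).
Proof.
have [_ _ _ acycWE] := treeWE; rewrite /has_cycle !adjE /= in acycWE *.
move=> -[c [c3 uc cc]]; have [vc | vNc] := boolP (v \in c); last first.
  apply: acycWE; exists c; split => //.
  apply: (sub_in_cycle (P := predC1 v)) cc; last first.
    by apply/allP => x xc /=; apply: contraNneq vNc => <-.
  by move=> x y /= xv yv; rewrite edge_rel_leaf (negbTE xv) (negbTE yv) andbF.
have [i c' rot_c] := rot_to vc.
have : cycle (edge_rel (e :: E)) (v :: c') by rewrite -rot_c rot_cycle.
have : uniq (v :: c') by rewrite -rot_c rot_uniq.
have : (3 <= size (v :: c'))%N by rewrite -rot_c size_rot.
case: c' {rot_c} => [| y [| z c'']] //= _ /andP[_ /andP[yNc _]].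
rewrite rcons_path => /and4P[/leaf_neighbour yu _ _].
rewrite edge_relC => /leaf_neighbour lu.
by move: (mem_last z c'') yNc; rewrite lu -yu => ->.
Qed.

Lemma is_tree_leaf : is_tree (Graph (v |` W) (e :: E)).
Proof.
split; [ | exact: simple_leaf | exact: connected_leaf | exact: acyclic_leaf].
by apply/fset0Pn; exists v; rewrite fset1U1.
Qed.

End AddLeaf.

(* Repeatedly hang an edge of [GE] that leaves the current tree as a new leaf. *)
Lemma extend_tree_closed (GE : seq (X * X)) (T : graph X) :
  is_tree T -> {subset edges T <= GE} ->
  exists T', [/\ is_tree T', verts T `<=` verts T', {subset edges T' <= GE}
               & edge_closed GE (verts T')].
Proof.
set V := verts T `|` seq_fset tt (unzip1 GE ++ unzip2 GE).
have GE_V e : e \in GE -> e.1 \in V /\ e.2 \in V.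
  move=> eGE; rewrite !in_fsetU !seq_fsetE !mem_cat.
  by rewrite (map_f fst eGE) (map_f snd eGE) !orbT.
have : verts T `<=` V by exact: fsubsetUl.
clearbody V; have [n] := ubnP #|` V `\` verts T|.
elim: n T => // n IH [W E] /= ltn TV treeT TGE.
have [cross | noncross] := boolP (has (fun e => (e.1 \in W) != (e.2 \in W)) GE);
  last first.
  exists (Graph W E); split => //= e eGE.
  by apply/eqP; move/hasPn: noncross => /(_ e eGE); rewrite negbK.
have [u [v [e [eGE uW vW e_uv]]]] : exists u v e,
    [/\ e \in GE, u \in W, v \notin W & (e == (u, v)) || (e == (v, u))].
  case/hasP: cross => -[a b] abGE /=.
  have [aW | aNW] := boolP (a \in W) => ab.
    have bNW : b \notin W by move: ab; case: (b \in W).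
    by exists a, b, (a, b); rewrite eqxx.
  have bW : b \in W by move: ab; case: (b \in W).
  by exists b, a, (a, b); rewrite eqxx orbT.
have vV : v \in V by case/orP: e_uv (GE_V _ eGE) => /eqP -> [].
have ltn' : (#|` V `\` (v |` W)| < n)%N.
  rewrite fsetUC -fsetDDl; move: ltn.
  by rewrite [#|` V `\` W|](cardfsD1 v) in_fsetD vV vW add1n ltnS.
have TV' : v |` W `<=` V by rewrite fsubUset fsub1set vV TV.
have TGE' : {subset e :: E <= GE} by move=> e'; rewrite in_cons => /orP[/eqP -> | /TGE].
have treeLeaf := is_tree_leaf treeT uW vW e_uv.
have [T' [treeT' WT' T'GE clT']] := IH (Graph (v |` W) (e :: E)) ltn' TV' treeLeaf TGE'.
exists T'; split=> //; exact: fsubset_trans (fsubsetU1 _ _) WT'.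
Qed.

Lemma steiner_tree_in_edges (GE : seq (X * X)) (r : X) (S : {fset X}) :
  (forall x, x \in S -> exists2 p, path (edge_rel GE) r p & last r p = x) ->
  exists T, steiner_tree T S /\ {subset edges T <= GE}.
Proof.
move=> reachS; have nilGE : {subset edges (Graph [fset r] [::]) <= GE} by [].
have [T [treeT rT TGE clT]] := extend_tree_closed (is_tree_fset1 r) nilGE.
exists T; split=> //; split=> //; apply/fsubsetP => x /reachS [p pp <-].
by apply: edge_closed_path clT _ pp; apply: (fsubsetP rT); rewrite inE.
Qed.

Lemma ler_sum_sub_uniq (R : numDomainType) (T : eqType) (f : T -> R) (s t : seq T) :
  (forall x, 0 <= f x) -> uniq s -> {subset s <= t} ->
  \sum_(x <- s) f x <= \sum_(x <- t) f x.
Proof.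
move=> f_ge0; elim: t s => [|y t IH] s us st.
  by case: s us st => [_ _ | x s _ /(_ x (mem_head _ _))]; rewrite ?big_nil.
have [ys | yNs] := boolP (y \in s).
  rewrite (perm_big _ (perm_to_rem ys)) !big_cons lerD2l.
  apply: IH; first exact: rem_uniq.
  move=> x; rewrite (mem_rem_uniq _ us) => /andP[xy /st].
  by rewrite in_cons (negbTE xy).
rewrite big_cons -[X in X <= _]add0r lerD // IH // => x xs.
by have := st x xs; rewrite in_cons => /orP[/eqP xy | //]; rewrite -xy xs in yNs.
Qed.

Lemma glength_le_sub (R : realFieldType) (d : X -> X -> R) (T : graph X) GE :
  (forall x y, 0 <= d x y) -> is_tree T -> {subset edges T <= GE} ->
  glength d T <= \sum_(e <- GE) d e.1 e.2.
Proof.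
by move=> d_ge0 /tree_uniq_edges; apply: ler_sum_sub_uniq => e; apply: d_ge0.
Qed.

Lemma two_level_union_steiner (R : realFieldType) (d : X -> X -> R) (k : nat)
    (P : 'I_k -> {fset X}) (Ttop : graph X) (T : 'I_k -> graph X) (q : 'I_k -> X) :
  (forall x y, 0 <= d x y) -> (forall i, q i \in P i) -> two_level P Ttop T ->
  exists S, steiner_tree S [fset q i | i : 'I_k] /\
            glength d S <= two_level_length d Ttop T.
Proof.
move=> d_ge0 qP [[topN0 _ connTop _] [q' q'P]].
set GE := edges Ttop ++ flatten [seq edges (T i) | i <- index_enum 'I_k].
have [r rTop] := fset0Pn _ topN0.
have topGE : {subset edges Ttop <= GE} by move=> e eT; rewrite mem_cat eT.
have TGE i : {subset edges (T i) <= GE}.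
  move=> e eT; rewrite mem_cat; apply/orP; right; apply/flattenP.
  by exists (edges (T i)) => //; apply: map_f; exact: mem_index_enum.
have [|S [stS SGE]] := steiner_tree_in_edges (GE := GE) (r := r)
    (S := [fset q i | i : 'I_k]).
  move=> _ /imfsetP[i _ ->]; have [q'Top q'T [[_ _ connT _] PT]] := q'P i.
  have [p1 [pp1 lp1]] := connTop r (q' i) rTop q'Top.
  have [p2 [pp2 lp2]] := connT (q' i) (q i) q'T (fsubsetP PT _ (qP i)).
  exists (p1 ++ p2); last by rewrite last_cat lp1.
  rewrite cat_path (sub_path (edge_rel_sub topGE) pp1) lp1.
  exact: (sub_path (edge_rel_sub (TGE i)) pp2).
exists S; split=> //; apply: le_trans (glength_le_sub d_ge0 stS.1 SGE) _.
by rewrite big_cat big_flatten /= big_map.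
Qed.

End SteinerTrees.

Lemma approx_alg_mul_ge0 (R : realFieldType) (X : choiceType) (d : X -> X -> R)
    (alpha : R) (A : {fset X} -> graph X) (S : {fset X}) (T : graph X) :
  (forall x y, 0 <= d x y) -> approx_alg d alpha A -> steiner_tree T S ->
  0 <= alpha * glength d T.
Proof.
by move=> d_ge0 HA stT; apply: le_trans ((HA S).2 T stT); apply: glength_ge0.
Qed.

(* For [alpha < 0] the hypotheses force both sides to vanish. *)
Lemma approx_sum_le (R : realDomainType) (alpha a b L t s : R) :
  0 <= L -> 0 <= t -> 0 <= b -> L <= t + s ->
  a <= alpha * L -> b <= alpha * s -> 0 <= alpha * t ->
  a + b <= 2 * alpha * (t + s).
Proof.
move=> L0 t0 b0 Lts aL bs at0; have [alpha_ge0 | alpha_lt0] := lerP 0 alpha.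
  have : alpha * L <= alpha * (t + s) by apply: ler_wpM2l.
  lra.
have : alpha * L <= 0 by rewrite mulr_le0_ge0 // ltW.
lra.
Qed.

Theorem theorem1 (R : realFieldType) (X : choiceType) (d : X -> X -> R)
  (Pall : {fset X}) (k : nat) (P : 'I_k -> {fset X})
  (alpha : R) (A : {fset X} -> graph X) (q : 'I_k -> X) :
  is_metric d ->
  (forall i, P i != fset0) ->
  (forall i j, i != j -> [disjoint P i & P j]) ->
  (forall x, x \in Pall <-> exists i, x \in P i) ->
  approx_alg d alpha A ->
  (forall i, q i \in P i) ->
  two_level P (A [fset q i | i : 'I_k]) (fun i => A (P i)) /\
  forall (Ttop' : graph X) (T' : 'I_k -> graph X),
    two_level P Ttop' T' ->
    two_level_length d (A [fset q i | i : 'I_k]) (fun i => A (P i))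
      <= 2 * alpha * two_level_length d Ttop' T'.
Proof.
move=> [d_ge0 _ _ _] _ _ _ HA qP; set Q := [fset q i | i : 'I_k].
split.
  have [[treeQ QA] _] := HA Q; split=> //; exists q => i.
  have [[treeP PA] _] := HA (P i).
  by split=> //; [apply: (fsubsetP QA); exact: in_imfset | exact: (fsubsetP PA)].
move=> Ttop' T' tlT'; have [S [stS lenS]] := two_level_union_steiner d_ge0 qP tlT'.
have [treeTop [q' q'P]] := tlT'.
have stT' i : steiner_tree (T' i) (P i) by have [] := q'P i.
apply: approx_sum_le (glength_ge0 _ d_ge0) (glength_ge0 _ d_ge0) _ lenS
  ((HA Q).2 S stS) _ _.
- by apply: sumr_ge0 => i _; exact: glength_ge0.
- by rewrite mulr_sumr; apply: ler_sum => i _; exact: (HA (P i)).2.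
- by apply: (approx_alg_mul_ge0 d_ge0 HA (S := fset0)); split=> //; exact: fsub0set.
Qed.
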